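(* Let $c\ge 1$. There exists a constant $A=A(c)\in(0,\infty)$ (depending only on $c$, in particular independent of $N$) such that the following holds for every $N$. Let $V_N=\{0,\ldots,N\}$ and let $\mathcal Q_N$ be the set of all birth and death Markov kernels $Q$ on $V_N$ with $Q(x,y)\in[1/4,3/4]$ whenever $|x-y|\le 1$, and whose reversible probability measure $\pi$ satisfies $1/4\le (N+1)\pi(x)\le 4$ for all $x\in V_N$. Let $(K_i)_{i\ge1}$ be a sequence with $K_i\in\mathcal Q_N$ for all $i$, and assume that $(K_i)_{i\ge1}$ is $c$-stable with respect to the uniform probability measure on $V_N$. Then for every $\varepsilon\in(0,1)$ the relative-sup merging time of $(K_i)_{i\ge1}$ satisfies \[T_\infty(\varepsilon)\le A N^2\bigl(1+\log_+ (1/\varepsilon)\bigr).\]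
   Context: A Markov kernel $K$ on a finite set $V$ satisfies $K(x,y)\ge0$ and $\sum_y K(x,y)=1$. For a sequence $(K_i)_{i\ge1}$ of Markov kernels, $K_{n,m}=K_{n+1}K_{n+2}\cdots K_m$ (matrix product) for $m\ge n$, with $K_{n,n}=I$. A birth and death kernel on $\{0,\ldots,N\}$ is one with $Q(x,y)=0$ whenever $|x-y|>1$. The sequence $(K_i)$ is $c$-stable with respect to a probability measure $\mu_0$ if, setting $\mu_n=\mu_0K_{0,n}$, one has $c^{-1}\le \mu_n(x)/\mu_0(x)\le c$ for all $n\ge0$ and $x\in V$. The relative-sup merging time is $T_\infty(\varepsilon)=\inf\{n: \max_{x,y,z\in V}|K_{0,n}(x,z)/K_{0,n}(y,z)-1|<\varepsilon\}$, with the conventions $0/0=1$ and $a/0=\infty$ for $a>0$. $\log_+ t=\max(\log t,0)$. *)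

From HB Require Import structures.
From mathcomp Require Import all_boot all_order all_algebra.
From mathcomp Require Import reals exp.
Set Implicit Arguments. Unset Strict Implicit. Unset Printing Implicit Defensive.
Import Order.TTheory GRing.Theory Num.Theory.
Local Open Scope ring_scope.

Section Defs.
Variable R : realType.

Definition markov_kernel n (K : 'M[R]_n) : Prop :=
  (forall x y, 0 <= K x y) /\ (forall x, \sum_y K x y = 1).

Definition birth_death N (Q : 'M[R]_N.+1) : Prop :=
  forall x y : 'I_N.+1, (x.+1 < y)%N || (y.+1 < x)%N -> Q x y = 0.

Definition prob_measure n (p : 'rV[R]_n) : Prop :=
  (forall x, 0 <= p 0 x) /\ \sum_x p 0 x = 1.

Definition reversible n (Q : 'M[R]_n) (p : 'rV[R]_n) : Prop :=
  prob_measure p /\ forall x y, p 0 x * Q x y = p 0 y * Q y x.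

Definition QN N (Q : 'M[R]_N.+1) : Prop :=
  [/\ markov_kernel Q, birth_death Q,
      (forall x y : 'I_N.+1, (x <= y.+1)%N && (y <= x.+1)%N ->
          1/4 <= Q x y <= 3/4)
    & exists p : 'rV[R]_N.+1, reversible Q p /\
        forall x, 1/4 <= N.+1%:R * p 0 x <= 4].

(* K_{0,n} = K_1 K_2 ... K_n, with K_{0,0} = I *)
Fixpoint Kprod n (K : nat -> 'M[R]_n) (m : nat) : 'M[R]_n :=
  match m with
  | O => 1%:M
  | S m' => Kprod K m' *m K m
  end.

Definition unif N : 'rV[R]_N.+1 := const_mx (N.+1%:R)^-1.

Definition c_stable n (c : R) (K : nat -> 'M[R]_n) (mu0 : 'rV[R]_n) : Prop :=
  forall (m : nat) x, c^-1 <= (mu0 *m Kprod K m) 0 x / mu0 0 x <= c.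

(* |a/b - 1| < eps with conventions 0/0 = 1 and a/0 = +oo for a > 0
   (entries are nonnegative, so b = 0 and a <> 0 gives ratio +oo). *)
Definition ratio_close (a b eps : R) : Prop :=
  if b == 0 then a = 0 else `|a / b - 1| < eps.

(* the set whose infimum is T_infty(eps): max_{x,y,z} |K_{0,n}(x,z)/K_{0,n}(y,z)-1| < eps *)
Definition merged n (K : nat -> 'M[R]_n) (eps : R) (m : nat) : Prop :=
  forall x y z, ratio_close (Kprod K m x z) (Kprod K m y z) eps.

Definition logp (t : R) : R := Num.max (ln t) 0.

End Defs.

From HB Require Import structures.
From mathcomp Require Import all_boot all_order all_algebra.
From mathcomp Require Import reals exp sequences.
From mathcomp Require Import ring lra zify.
Set Implicit Arguments. Unset Strict Implicit. Unset Printing Implicit Defensive.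
Import Order.TTheory GRing.Theory Num.Theory.
Local Open Scope ring_scope.

(* Fix a target state z and a horizon n, write mu_s for the law at time s and
   p := mu_n(z), and pull the column K_{n-j,n}(., z) back one kernel at a time.
   Its mean under mu_{n-j} is always p, and its variance v_j drops at each step
   by at least its Dirichlet energy on the path times 1/(16 c (N+1)): every
   kernel moves along each edge with probability at least 1/4, and stability
   gives mu_s >= 1/(c (N+1)).  On a path of length N the energy controls the
   variance (Poincare) and the variance squared over p^2 (Nash), both with
   a factor N.  With M ~ 16 c N^2 the Nash inequality forces v_M <= p^2, after
   which v_j decays like (1 - 1/M)^j; within M more steps the energy itself,
   hence the sup-distance of the column from p, becomes small, and averaging
   against K_{0,n-j}(x, .) puts K_{0,n}(x, z) within a factor 1 +- eps/4 of p
   for every x.  Taking n ~ M log(1/eps) gives the theorem.  Only the lower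
   bound 1/4 on the nearest-neighbour entries of the kernels is used. *)

(** * Weighted means and variances *)

Section WeightedMean.
Variables (R : realType) (I : finType) (w : I -> R).

Definition wmean (f : I -> R) : R := \sum_i w i * f i.
Definition wvar (f : I -> R) : R := \sum_i w i * (f i - wmean f) ^+ 2.

Hypotheses (w_ge0 : forall i, 0 <= w i) (w_sum1 : \sum_i w i = 1).

Lemma wmean_cst (a : R) : wmean (fun=> a) = a.
Proof. by rewrite /wmean -mulr_suml w_sum1 mul1r. Qed.

Lemma wmeanB (f g : I -> R) : wmean (fun i => f i - g i) = wmean f - wmean g.
Proof. by rewrite /wmean -sumrB; apply: eq_bigr => i _; rewrite mulrBr. Qed.

Lemma wvar_ge0 (f : I -> R) : 0 <= wvar f.
Proof. by apply: sumr_ge0 => i _; rewrite mulr_ge0 ?sqr_ge0. Qed.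

Lemma wvarE (f : I -> R) : wvar f = wmean (fun i => f i ^+ 2) - wmean f ^+ 2.
Proof.
rewrite /wvar; set m := wmean f.
rewrite (eq_bigr (fun i => w i * f i ^+ 2 - (m *+ 2 * (w i * f i) - m ^+ 2 * w i)));
  last by move=> i _; ring.
by rewrite !sumrB -!mulr_sumr w_sum1 -/(wmean f) -/m /wmean; ring.
Qed.

Lemma wvar_le (f : I -> R) (B : R) :
  (forall i, (f i - wmean f) ^+ 2 <= B) -> wvar f <= B.
Proof.
move=> fB; apply: le_trans (_ : \sum_i w i * B <= _).
  by apply: ler_sum => i _; rewrite ler_wpM2l.
by rewrite -mulr_suml w_sum1 mul1r.
Qed.

Lemma sqr_wmean_le (f : I -> R) (B : R) :
  (forall i, f i ^+ 2 <= B) -> wmean f ^+ 2 <= B.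
Proof.
move=> fB; have := wvar_ge0 f; rewrite wvarE.
have : wmean (fun i => f i ^+ 2) <= B.
  by rewrite -[B]wmean_cst; apply: ler_sum => i _; rewrite ler_wpM2l.
lra.
Qed.

Lemma pair_le_sum (F : I -> R) (x x' : I) :
  x' != x -> (forall i, 0 <= F i) -> F x + F x' <= \sum_i F i.
Proof.
move=> x'x F0; rewrite (bigD1 x) //= (bigD1 x') //=.
have : 0 <= \sum_(i | (i != x) && (i != x')) F i by apply: sumr_ge0.
lra.
Qed.

Lemma wvar_ge_pair (f : I -> R) (x x' : I) :
  x' != x -> w x * w x' * (f x' - f x) ^+ 2 <= wvar f.
Proof.
move=> x'x; set m := wmean f.
have ab1 : w x + w x' <= 1 by rewrite -w_sum1; apply: pair_le_sum.
apply: le_trans (pair_le_sum (F := fun i => w i * (f i - m) ^+ 2) x'x _);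
  last by move=> i; rewrite mulr_ge0 ?sqr_ge0.
have a0 := w_ge0 x; have b0 := w_ge0 x'.
set a := w x in ab1 a0 *; set b := w x' in ab1 b0 *.
set u := f x - m; set v := f x' - m.
have -> : f x' - f x = v - u by rewrite /u /v; ring.
have key : a * u ^+ 2 + b * v ^+ 2 - a * b * (v - u) ^+ 2
    = (a * u + b * v) ^+ 2 + a * (1 - a - b) * u ^+ 2 + b * (1 - a - b) * v ^+ 2.
  by ring.
have := sqr_ge0 (a * u + b * v).
have : 0 <= a * (1 - a - b) * u ^+ 2 by rewrite mulr_ge0 ?sqr_ge0 // mulr_ge0 //; lra.
have : 0 <= b * (1 - a - b) * v ^+ 2 by rewrite mulr_ge0 ?sqr_ge0 // mulr_ge0 //; lra.
lra.
Qed.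

(* A Nash-type inequality; it is what saves a factor [log N] in the merging time. *)
Lemma sqr_wvar_le (f : I -> R) (D : R) : 0 <= D ->
  (forall i, 0 <= f i) -> (forall i, (f i - wmean f) ^+ 2 <= D) ->
  wvar f ^+ 2 <= wmean f ^+ 2 * D.
Proof.
move=> D0 f0 fD; set m := wmean f; set t := Num.sqrt D.
have t0 : 0 <= t by apply: sqrtr_ge0.
have m0 : 0 <= m by apply: sumr_ge0 => i _; rewrite mulr_ge0.
have centred : \sum_i w i * (f i - m) = 0.
  by have := wmeanB f (fun=> m); rewrite wmean_cst subrr.
have varE : wvar f = \sum_i w i * f i * (f i - m).
  rewrite /wvar -/m (eq_bigr (fun i => w i * f i * (f i - m) - m * (w i * (f i - m)))).
    by rewrite sumrB -mulr_sumr centred mulr0 subr0.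
  by move=> i _; ring.
have : wvar f <= m * t.
  rewrite varE /m /wmean mulr_suml; apply: ler_sum => i _.
  rewrite -/(wmean f) -/m ler_wpM2l ?mulr_ge0 //.
  have := fD i; rewrite -/m -(sqr_sqrtr D0) -/t => h.
  nra.
have := wvar_ge0 f; rewrite -[D](sqr_sqrtr D0) -/t; nra.
Qed.

End WeightedMean.

Lemma eq_wvar (R : realType) (I : finType) (w w' f f' : I -> R) :
  w =1 w' -> f =1 f' -> wvar w f = wvar w' f'.
Proof.
move=> ww' ff'; have mE : wmean w f = wmean w' f'.
  by apply: eq_bigr => i _; rewrite ww' ff'.
by apply: eq_bigr => i _; rewrite ww' ff' mE.
Qed.

Lemma wvar_mixture (R : realType) (I J : finType) (w : I -> R) (L : I -> J -> R)
    (f : J -> R) :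
  \sum_x w x = 1 -> (forall x, \sum_y L x y = 1) ->
  wvar (fun y => \sum_x w x * L x y) f
    = wvar w (fun x => wmean (L x) f) + \sum_x w x * wvar (L x) f.
Proof.
move=> w1 L1.
have mixE g : wmean (fun y => \sum_x w x * L x y) g = wmean w (fun x => wmean (L x) g).
  rewrite /wmean; under eq_bigr do rewrite mulr_suml.
  rewrite exchange_big /=; apply: eq_bigr => x _; rewrite mulr_sumr.
  by apply: eq_bigr => y _; rewrite mulrA.
have mix1 : \sum_y \sum_x w x * L x y = 1.
  by rewrite exchange_big /=; under eq_bigr do rewrite -mulr_sumr L1 mulr1.
rewrite !wvarE // mixE mixE.
under eq_bigr do rewrite wvarE //.
rewrite /wmean; under [X in _ = _ + X]eq_bigr do rewrite mulrBr.
rewrite sumrB; ring.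
Qed.

Lemma sqr_sum_nat_le (R : realType) (m n : nat) (d : nat -> R) :
  (\sum_(m <= i < n) d i) ^+ 2 <= (n - m)%:R * \sum_(m <= i < n) d i ^+ 2.
Proof.
rewrite expr2 mulr_suml.
apply: le_trans (_ : \sum_(m <= i < n) \sum_(m <= j < n) (d i ^+ 2 + d j ^+ 2) / 2 <= _).
  apply: ler_sum => i _; rewrite mulr_sumr; apply: ler_sum => j _.
  have := sqr_ge0 (d i - d j); lra.
under eq_bigr do rewrite -mulr_suml big_split /= sumr_const_nat.
rewrite -mulr_suml big_split /= sumr_const_nat sumrMnl mulr_natl.
set X := _ *+ (n - m); lra.
Qed.

(** * The Dirichlet form of the path *)

Section PathDirichlet.
Variables (R : realType) (N : nat).
Implicit Types (f w : 'I_N.+1 -> R).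

Definition dirichlet f : R := \sum_(i < N) (f (inord i.+1) - f (inord i)) ^+ 2.

Lemma dirichlet_ge0 f : 0 <= dirichlet f.
Proof. by apply: sumr_ge0 => i _; exact: sqr_ge0. Qed.

Lemma sqr_sub_le_dirichlet f x y : (f x - f y) ^+ 2 <= N%:R * dirichlet f.
Proof.
wlog xy : x y / (x <= y)%N.
  move=> H; case: (leqP x y) => [|/ltnW]; first exact: H.
  by rewrite -sqrrN opprB; apply: H.
pose F k := f (inord k).
have yN : (y <= N)%N by rewrite -ltnS.
have -> : f x - f y = - \sum_(x <= k < y) (F k.+1 - F k).
  by rewrite telescope_sumr // /F !inord_val opprB.
rewrite sqrrN; apply: le_trans (sqr_sum_nat_le _ _ _) _.
have sq_ge0 a b : 0 <= \sum_(a <= i < b) (F i.+1 - F i) ^+ 2.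
  by apply: sumr_ge0 => i _; exact: sqr_ge0.
apply: ler_pM => //; first by rewrite ler_nat (leq_trans (leq_subr _ _) yN).
rewrite /dirichlet -(big_mkord xpredT (fun i => (F i.+1 - F i) ^+ 2)).
rewrite (big_cat_nat (leq0n x) (leq_trans xy yN)) (big_cat_nat xy yN) /=.
by rewrite addrCA lerDl addr_ge0.
Qed.

Lemma sqr_sub_wmean_le_dirichlet w f x :
  (forall y, 0 <= w y) -> \sum_y w y = 1 ->
  (f x - wmean w f) ^+ 2 <= N%:R * dirichlet f.
Proof.
move=> w0 w1; rewrite -[f x](wmean_cst w1) -wmeanB //.
by apply: sqr_wmean_le => // y; exact: sqr_sub_le_dirichlet.
Qed.

Lemma dirichlet_le_wvar_rows (L : 'I_N.+1 -> 'I_N.+1 -> R) w f a :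
  (forall x y, 0 <= L x y) -> (forall x, \sum_y L x y = 1) -> (forall x, 0 <= w x) ->
  (forall i : 'I_N, a <= w (inord i) * L (inord i) (inord i) * L (inord i) (inord i.+1)) ->
  a * dirichlet f <= \sum_x w x * wvar (L x) f.
Proof.
move=> L0 L1 w0 aL.
have row_ge0 x : 0 <= w x * wvar (L x) f by rewrite mulr_ge0 //; exact: wvar_ge0.
apply: le_trans (_ : \sum_(i < N) w (inord i) * wvar (L (inord i)) f <= _).
  rewrite /dirichlet mulr_sumr; apply: ler_sum => i _.
  have i_lt : (i < N.+1)%N by rewrite ltnS ltnW.
  have i1_lt : (i.+1 < N.+1)%N by rewrite ltnS.
  have ii1 : (inord i.+1 : 'I_N.+1) != inord i.
    by apply/eqP => /(congr1 val) /=; rewrite !inordK // => /esym/n_Sn.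
  set x := (inord i : 'I_N.+1) in ii1 *; set x' := (inord i.+1 : 'I_N.+1) in ii1 *.
  apply: le_trans (_ : w x * L x x * L x x' * (f x' - f x) ^+ 2 <= _).
    by rewrite ler_wpM2r ?sqr_ge0 ?aL.
  by rewrite -2!mulrA ler_wpM2l // mulrA; exact: wvar_ge_pair.
have widen_inord (i : 'I_N) : widen_ord (leqnSn N) i = inord i.
  by apply: val_inj; rewrite /= inordK // ltnS ltnW.
rewrite big_ord_recr /=; under [X in _ <= X + _]eq_bigr do rewrite widen_inord.
by rewrite lerDl row_ge0.
Qed.

End PathDirichlet.

Section MarkovKernels.
Variables (R : realType) (n : nat).

Lemma markov_kernel1 : markov_kernel (1%:M : 'M[R]_n).
Proof.
split=> [x y|x]; first by rewrite mxE; case: (x == y).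
rewrite (bigD1 x) //= mxE eqxx big1 ?addr0 // => y /negbTE.
by rewrite mxE eq_sym => ->.
Qed.

Lemma markov_kernel_mul (A B : 'M[R]_n) :
  markov_kernel A -> markov_kernel B -> markov_kernel (A *m B).
Proof.
move=> [A0 A1] [B0 B1]; split=> [x y|x].
  by rewrite mxE; apply: sumr_ge0 => w _; rewrite mulr_ge0.
under eq_bigr do rewrite mxE.
rewrite exchange_big /=.
by under eq_bigr do rewrite -mulr_sumr B1 mulr1.
Qed.

Lemma prob_measure_mul (p : 'rV[R]_n) (A : 'M[R]_n) :
  prob_measure p -> markov_kernel A -> prob_measure (p *m A).
Proof.
move=> [p0 p1] [A0 A1]; split=> [x|].
  by rewrite mxE; apply: sumr_ge0 => w _; rewrite mulr_ge0.
under eq_bigr do rewrite mxE.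
rewrite exchange_big /=.
by under eq_bigr do rewrite -mulr_sumr A1 mulr1.
Qed.

End MarkovKernels.

Lemma prob_measure_unif (R : realType) (N : nat) : prob_measure (unif R N).
Proof.
split=> [x|]; first by rewrite mxE invr_ge0.
under eq_bigr do rewrite mxE.
by rewrite sumr_const card_ord -(mulr_natr (N.+1%:R^-1)) mulVf ?pnatr_eq0.
Qed.

(* [Kseg K s m] is the paper's [K_{s,s+m}] = [K_{s+1} ... K_{s+m}]. *)
Fixpoint Kseg (R : realType) n (K : nat -> 'M[R]_n) (s m : nat) : 'M[R]_n :=
  if m is m'.+1 then K s.+1 *m Kseg K s.+1 m' else 1%:M.

Section KernelProducts.
Variables (R : realType) (n : nat) (K : nat -> 'M[R]_n).
Hypothesis K_markov : forall i, (0 < i)%N -> markov_kernel (K i).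

Lemma KprodD s m : Kprod K (s + m) = Kprod K s *m Kseg K s m.
Proof.
elim: m s => [|m IH] s; first by rewrite addn0 mulmx1.
by rewrite addnS -addSn IH /= mulmxA.
Qed.

Lemma Kprod_markov m : markov_kernel (Kprod K m).
Proof.
elim: m => [|m IH] /=; first exact: markov_kernel1.
by apply: markov_kernel_mul => //; apply: K_markov.
Qed.

Lemma Kseg_markov s m : markov_kernel (Kseg K s m).
Proof.
elim: m s => [|m IH] s /=; first exact: markov_kernel1.
by apply: markov_kernel_mul => //; apply: K_markov.
Qed.

End KernelProducts.

(** * Decay of a dissipating sequence *)

(* With t := j.+1 * u <= P + u: j.+1 * (P u - u^2) = t (P - u) <= t (2 P - t) <= P^2. *)
Lemma decay_step (R : realType) (P u w : R) (j : nat) :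
  0 < P -> 0 <= u -> j%:R * u <= P -> P * w <= P * u - u ^+ 2 ->
  j.+1%:R * w <= P.
Proof.
move=> P_gt0 u0 juP wP.
set t := j.+1%:R * u.
have tE : t = j%:R * u + u by rewrite /t -natr1 mulrDl mul1r.
have t0 : 0 <= t by rewrite mulr_ge0.
rewrite -(ler_pM2l P_gt0).
apply: le_trans (_ : t * (2 * P - t) <= _); last by have := sqr_ge0 (P - t); lra.
apply: le_trans (_ : t * (P - u) <= _); last by rewrite ler_wpM2l //; lra.
have -> : t * (P - u) = j.+1%:R * (P * u - u ^+ 2) by rewrite /t; ring.
by rewrite mulrCA ler_wpM2l.
Qed.

Section DissipationDecay.
Variables (R : realType) (v e : nat -> R) (n M : nat).
Hypothesis M_gt0 : (0 < M)%N.
Hypothesis v_step : forall j, (j < n)%N -> v j.+1 <= v j - e j.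
Hypothesis v_ge0 : forall j, (j <= n)%N -> 0 <= v j.

Section Decay.
Variable p : R.
Hypothesis p_gt0 : 0 < p.
Hypothesis v_nash : forall j, (j <= n)%N -> v j ^+ 2 <= p ^+ 2 * (M%:R * e j).
Hypothesis v_poincare : forall j, (j <= n)%N -> v j <= M%:R * e j.

Lemma nash_decay j : (j <= n)%N -> j%:R * v j <= M%:R * p ^+ 2.
Proof.
set P := M%:R * p ^+ 2.
have P_gt0 : 0 < P by rewrite mulr_gt0 ?ltr0n ?exprn_gt0.
elim: j => [|j IH] jn; first by rewrite mul0r ltW.
have jn' : (j <= n)%N by apply: ltnW.
apply: (decay_step P_gt0 (v_ge0 jn') (IH jn')).
have : v j ^+ 2 <= P * e j by rewrite /P -mulrA mulrCA; exact: v_nash.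
have := ler_wpM2l (ltW P_gt0) (v_step jn); rewrite mulrBr.
lra.
Qed.

Lemma geometric_decay i : (M + i <= n)%N -> v (M + i) <= p ^+ 2 * (1 - M%:R^-1) ^+ i.
Proof.
have M_gt0' : 0 < (M%:R : R) by rewrite ltr0n.
have q0 : 0 <= 1 - (M%:R : R)^-1 by rewrite subr_ge0 invf_le1 // ler1n.
elim: i => [|i IH] Mi.
  by move: Mi; rewrite !addn0 expr0 mulr1 => /nash_decay; rewrite ler_pM2l.
have Mi' : (M + i <= n)%N by apply: leq_trans Mi; rewrite addnS.
have contract : v (M + i.+1) <= v (M + i) * (1 - M%:R^-1).
  have : v (M + i) / M%:R <= e (M + i) by rewrite ler_pdivrMr // mulrC v_poincare.
  have Mi2 : (M + i < n)%N by rewrite -addnS.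
  by have := v_step Mi2; rewrite addnS; lra.
apply: le_trans contract _.
by rewrite [_ ^+ i.+1]exprSr mulrA ler_wpM2r // IH.
Qed.

End Decay.

Lemma exists_small_dissipation J V : (J + M <= n)%N -> v J <= V ->
  exists2 j, (J <= j <= n)%N & M%:R * e j <= V.
Proof.
move=> JMn vJ.
case: (boolP [exists i : 'I_M, M%:R * e (J + i)%N <= V]).
  move/existsP => [i hi]; exists (J + i)%N => //.
  by rewrite leq_addr /= (leq_trans _ JMn) // leq_add2l ltnW.
move/existsPn => big_e; exfalso.
have M_gt0' : 0 < (M%:R : R) by rewrite ltr0n.
have drop i : (i < M)%N -> v (J + i).+1 < v (J + i) - V / M%:R.
  move=> iM; have := big_e (Ordinal iM); rewrite /= -ltNge => hi.
  have Jin : (J + i < n)%N by apply: leq_trans JMn; rewrite ltn_add2l.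
  apply: le_lt_trans (v_step Jin) _.
  by rewrite ltrD2l ltrN2 ltr_pdivrMr // mulrC.
have below i : (i < M)%N -> v (J + i).+1 + i.+1%:R * (V / M%:R) < V.
  elim: i => [|i IH] iM; first by have := drop 0%N iM; rewrite addn0 mul1r; lra.
  have := drop i.+1 iM; have := IH (ltnW iM); rewrite addnS -natr1; lra.
have := below M.-1; rewrite ltn_predL M_gt0 -addnS prednK // => /(_ isT).
rewrite mulrC divfK ?gt_eqF //.
by have := v_ge0 JMn; lra.
Qed.

End DissipationDecay.

(** * Backward variances *)

Lemma QN_markov (R : realType) N (Q : 'M[R]_N.+1) : QN Q -> markov_kernel Q.
Proof. by case. Qed.

Lemma QN_edge_ge (R : realType) N (Q : 'M[R]_N.+1) (i : 'I_N) : QN Q ->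
  1 / 4 <= Q (inord i) (inord i) /\ 1 / 4 <= Q (inord i) (inord i.+1).
Proof.
case=> _ _ Qb _.
have i_lt : (i < N.+1)%N by rewrite ltnS ltnW.
have i1_lt : (i.+1 < N.+1)%N by rewrite ltnS.
have edge (x y : 'I_N.+1) : (x <= y.+1)%N && (y <= x.+1)%N -> 1 / 4 <= Q x y.
  by move/Qb/andP=> [].
by split; apply: edge; rewrite !inordK //; lia.
Qed.

Section BackwardVariance.
Variables (R : realType) (N : nat) (K : nat -> 'M[R]_N.+1) (c : R).
Hypothesis K_QN : forall i, (0 < i)%N -> QN (K i).
Hypothesis K_stable : c_stable c K (unif R N).
Hypothesis c_gt0 : 0 < c.

Let K_markov i (i_gt0 : (0 < i)%N) : markov_kernel (K i) := QN_markov (K_QN i_gt0).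

Definition law s : 'rV[R]_N.+1 := unif R N *m Kprod K s.

Lemma law_prob s : prob_measure (law s).
Proof. exact: prob_measure_mul (prob_measure_unif R N) (Kprod_markov K_markov s). Qed.

Lemma law_ge (s : nat) x : (c * N.+1%:R)^-1 <= law s 0 x.
Proof.
have /andP[+ _] := K_stable s x.
by rewrite /law invfM ler_pdivrMr ?ltr0n // [unif R N 0 x]mxE invrK.
Qed.

Lemma law_gt0 s x : 0 < law s 0 x.
Proof. by apply: lt_le_trans (law_ge s x); rewrite invr_gt0 mulr_gt0 ?ltr0n. Qed.

Variables (n : nat) (z : 'I_N.+1).
Local Notation p := (law n 0 z).

Definition colK j (x : 'I_N.+1) : R := Kseg K (n - j) j x z.

Lemma colK_ge0 j x : 0 <= colK j x.
Proof. by have [+ _] := Kseg_markov K_markov (n - j) j; apply. Qed.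

Lemma colK_succ j x : (j < n)%N ->
  colK j.+1 x = \sum_y K (n - j) x y * colK j y.
Proof.
move=> jn; rewrite /colK /=.
have -> : (n - j.+1).+1 = (n - j)%N by lia.
by rewrite mxE.
Qed.

Lemma Kprod_split j x : (j <= n)%N ->
  Kprod K n x z = \sum_y Kprod K (n - j) x y * colK j y.
Proof. by move=> jn; rewrite -{1}(subnK jn) KprodD mxE. Qed.

Lemma wmean_colK j : (j <= n)%N -> wmean (law (n - j) 0) (colK j) = p.
Proof.
move=> jn; rewrite /law -{2}(subnK jn) KprodD mulmxA [in RHS]mxE.
by apply: eq_bigr => y _; rewrite mxE.
Qed.

Definition varK j := wvar (law (n - j) 0) (colK j).

Lemma varK_ge0 j : 0 <= varK j.
Proof. by have [w0 _] := law_prob (n - j); apply: wvar_ge0. Qed.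

Lemma sqr_colK_sub_le_dirichlet j : (j <= n)%N ->
  forall y, (colK j y - p) ^+ 2 <= N%:R * dirichlet (colK j).
Proof.
move=> jn y; have [w0 w1] := law_prob (n - j).
by rewrite -(wmean_colK jn); apply: sqr_sub_wmean_le_dirichlet.
Qed.

Lemma varK_le_dirichlet j : (j <= n)%N -> varK j <= N%:R * dirichlet (colK j).
Proof.
move=> jn; have [w0 w1] := law_prob (n - j).
by apply: wvar_le => // y; rewrite wmean_colK //; apply: sqr_colK_sub_le_dirichlet.
Qed.

Lemma sqr_varK_le j : (j <= n)%N -> varK j ^+ 2 <= p ^+ 2 * (N%:R * dirichlet (colK j)).
Proof.
move=> jn; have [w0 w1] := law_prob (n - j).
rewrite -(wmean_colK jn); apply: sqr_wvar_le => //.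
- by rewrite mulr_ge0 ?dirichlet_ge0.
- exact: colK_ge0.
- by move=> y; rewrite wmean_colK //; apply: sqr_colK_sub_le_dirichlet.
Qed.

(* [1 / (16 c (N+1))] bounds from below the mass [mu_s(x) K(x,x) K(x,x+1)]
   carried by each edge, by stability and the [1/4] lower bound in [QN]. *)
Definition dissK j := (16 * c * N.+1%:R)^-1 * dirichlet (colK j).

Lemma varK_succ j : (j < n)%N -> varK j.+1 <= varK j - dissK j.
Proof.
move=> jn; set s := (n - j.+1)%N.
have sE : (n - j)%N = s.+1 by rewrite /s; lia.
have [w0 w1] := law_prob s.
have [K0 K1] := K_markov (ltn0Sn s).
have lawE : law s.+1 0 =1 (fun y => \sum_x law s 0 x * K s.+1 x y).
  by move=> y; rewrite /law /= mulmxA mxE.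
have mix : varK j = varK j.+1 + \sum_x law s 0 x * wvar (K s.+1 x) (colK j).
  rewrite /varK sE (eq_wvar lawE (frefl (colK j))) wvar_mixture //.
  congr (_ + _); apply: eq_wvar => [y|x] //.
  by rewrite colK_succ // sE.
have lower : dissK j <= \sum_x law s 0 x * wvar (K s.+1 x) (colK j).
  apply: dirichlet_le_wvar_rows => // i.
  have [k1 k2] := QN_edge_ge i (K_QN (ltn0Sn s)).
  have lb := law_ge s (inord i).
  have -> : (16 * c * N.+1%:R)^-1 = (c * N.+1%:R)^-1 * (1 / 4) * (1 / 4).
    by field; rewrite (gt_eqF c_gt0) andbT addrC natr1 pnatr_eq0.
  have c_N_ge0 : 0 <= (c * N.+1%:R)^-1 by rewrite invr_ge0 mulr_ge0 // ltW.
  have q_ge0 : 0 <= 1 / 4 :> R by lra.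
  by apply: ler_pM => //; [rewrite mulr_ge0 | apply: ler_pM].
lra.
Qed.

Lemma sqr_Kprod_sub_law_le (M k : nat) x :
  16 * c * N%:R * N.+1%:R <= M%:R -> (0 < M)%N -> (k.+2 * M <= n)%N ->
  (Kprod K n x z - p) ^+ 2 <= p ^+ 2 * (1 - M%:R^-1) ^+ (k * M).
Proof.
move=> MN M_gt0 kMn.
have p_gt0 := law_gt0 n z.
have dir_le j : N%:R * dirichlet (colK j) <= M%:R * dissK j.
  rewrite /dissK mulrA ler_wpM2r ?dirichlet_ge0 // ler_pdivlMr ?mulr_gt0 ?ltr0n //.
  by have -> : N%:R * (16 * c * N.+1%:R) = 16 * c * N%:R * N.+1%:R by ring.
have v_ge0 j (_ : (j <= n)%N) := varK_ge0 j.
have v_nash j (jn : (j <= n)%N) := le_trans (sqr_varK_le jn) (ler_wpM2l (sqr_ge0 p) (dir_le j)).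
have v_poincare j (jn : (j <= n)%N) := le_trans (varK_le_dirichlet jn) (dir_le j).
set V := p ^+ 2 * (1 - M%:R^-1) ^+ (k * M).
have vV : varK (M + k * M) <= V.
  apply: (geometric_decay M_gt0 varK_succ v_ge0 p_gt0 v_nash v_poincare).
  by rewrite !mulSn in kMn; lia.
have [|j /andP[_ jn] small] := exists_small_dissipation M_gt0 varK_succ v_ge0 _ vV.
  by rewrite !mulSn in kMn; lia.
have dev y : (colK j y - p) ^+ 2 <= V.
  exact: le_trans (sqr_colK_sub_le_dirichlet jn y) (le_trans (dir_le j) small).
have [r0 r1] := Kprod_markov K_markov (n - j).
have -> : Kprod K n x z - p = wmean (Kprod K (n - j) x) (fun y => colK j y - p).
  by rewrite (wmeanB _ (colK j) (fun=> p)) wmean_cst // (Kprod_split x jn).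
exact: sqr_wmean_le.
Qed.

End BackwardVariance.

(** * Merging time *)

Lemma pow_one_sub_inv_le_expR (R : realType) (M k : nat) : (0 < M)%N ->
  (1 - (M%:R : R)^-1) ^+ (k * M) <= expR (- k%:R).
Proof.
move=> M_gt0; have M_gt0' : 0 < (M%:R : R) by rewrite ltr0n.
have q0 : 0 <= 1 - (M%:R : R)^-1 by rewrite subr_ge0 invf_le1 // ler1n.
apply: le_trans (lerXn2r (k * M) _ _ (expR_ge1Dx (- M%:R^-1))) _;
  rewrite ?nnegrE ?expR_ge0 //.
rewrite -expRM_natl natrM.
by have -> : k%:R * M%:R * - (M%:R : R)^-1 = - k%:R by field; rewrite gt_eqF.
Qed.

Lemma expRN_le_sqr (R : realType) (eps : R) (k : nat) : 0 < eps ->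
  2 * ln (1 / eps) + 4 <= k%:R -> expR (- k%:R) <= (eps / 4) ^+ 2.
Proof.
move=> eps_gt0 kL.
have e2_le : 2 <= expR (1 : R) by have := expR_ge1Dx (1 : R); lra.
have e4_ge : 16 <= expR (4%:R : R).
  rewrite -[4%:R]mulr1 expRM_natl.
  apply: le_trans (lerXn2r 4 _ _ e2_le); rewrite ?nnegrE ?expR_ge0 //.
  by rewrite (_ : (2 : R) ^+ 4 = 16) //; rewrite !exprS expr0; lra.
apply: le_trans (_ : expR (2%:R * ln eps - 4%:R) <= _).
  by rewrite ler_expR; move: kL; rewrite div1r lnV ?posrE //; lra.
rewrite expRD expRM_natl lnK ?posrE // expRN expr_div_n ler_pM2l ?exprn_gt0 //.
by rewrite lef_pV2 ?posrE ?expR_gt0 //; lra.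
Qed.

Lemma ratio_close_of_near (R : realType) (a b p eps : R) : 0 < p -> 0 < eps < 1 ->
  (a - p) ^+ 2 <= (p * (eps / 4)) ^+ 2 -> (b - p) ^+ 2 <= (p * (eps / 4)) ^+ 2 ->
  ratio_close a b eps.
Proof.
move=> p_gt0 /andP[eps_gt0 eps_lt1].
have d_ge0 : 0 <= p * (eps / 4) by rewrite mulr_ge0 ?divr_ge0 // ltW.
have near u : (u - p) ^+ 2 <= (p * (eps / 4)) ^+ 2 ->
    - (p * (eps / 4)) <= u - p <= p * (eps / 4).
  by move=> h; apply/andP; split; nra.
move=> /near/andP[ha1 ha2] /near/andP[hb1 hb2].
have pe_gt0 : 0 < p * eps by apply: mulr_gt0.
have b_gt0 : 0 < b by nra.
rewrite /ratio_close gt_eqF //.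
have -> : a / b - 1 = (a - b) / b by field; rewrite gt_eqF.
have : eps * (p - p * (eps / 4)) <= eps * b by apply: ler_wpM2l; lra.
have : 0 < p * eps * (1 / 2 - eps / 4) by rewrite mulr_gt0 //; lra.
rewrite ltr_norml ltr_pdivlMr // ltr_pdivrMr //; lra.
Qed.

Lemma merged_Kprod (R : realType) N (K : nat -> 'M[R]_N.+1) (c eps : R) (M k : nat) :
  (forall i, (0 < i)%N -> QN (K i)) -> c_stable c K (unif R N) -> 0 < c ->
  0 < eps < 1 -> (0 < M)%N -> 16 * c * N%:R * N.+1%:R <= M%:R ->
  expR (- k%:R) <= (eps / 4) ^+ 2 -> merged K eps (k.+2 * M).
Proof.
move=> K_QN K_stable c_gt0 eps01 M_gt0 MN ek x y z.
have near w : (Kprod K (k.+2 * M) w z - law K (k.+2 * M) 0 z) ^+ 2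
    <= (law K (k.+2 * M) 0 z * (eps / 4)) ^+ 2.
  apply: le_trans (sqr_Kprod_sub_law_le K_QN K_stable c_gt0 _ w MN M_gt0 (leqnn _)) _.
  rewrite exprMn ler_wpM2l ?sqr_ge0 //.
  exact: le_trans (pow_one_sub_inv_le_expR R k M_gt0) ek.
exact: ratio_close_of_near (law_gt0 K_stable c_gt0 _ _) eps01 (near x) (near y).
Qed.

Lemma merging_time_le (R : realType) (c L : R) (N t : nat) :
  1 <= c -> 0 <= L -> (0 < N)%N -> t%:R <= 2 * L ->
  ((t + 5).+2 * (Num.truncn (16 * c * N%:R * N.+1%:R)).+1)%:R
    <= 231 * c * N%:R ^+ 2 * (1 + L).
Proof.
move=> c_ge1 L_ge0 N_gt0 tL.
have N_ge1 : 1 <= (N%:R : R) by rewrite ler1n.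
have k_le : ((t + 5).+2%:R : R) <= 7 * (1 + L) by rewrite -!natr1 natrD; lra.
set X := 16 * c * N%:R * N.+1%:R.
have M_le : ((Num.truncn X).+1%:R : R) <= 33 * c * N%:R ^+ 2.
  have : (Num.truncn X)%:R <= X by rewrite truncn_le /X !mulr_ge0 //; lra.
  have XE : X = 16 * (c * N%:R ^+ 2) + 16 * (c * N%:R) by rewrite /X -natr1; ring.
  have NN : N%:R <= N%:R ^+ 2 :> R by rewrite expr2; nra.
  have : c * N%:R <= c * N%:R ^+ 2 by rewrite ler_wpM2l //; lra.
  have : 1 <= c * N%:R ^+ 2 by nra.
  rewrite -natr1; lra.
rewrite natrM; apply: le_trans (ler_pM _ _ k_le M_le) _ => //.
have : 0 <= c * N%:R ^+ 2 * (1 + L) by rewrite !mulr_ge0 ?sqr_ge0 //; lra.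
lra.
Qed.

Theorem theorem1p14 (R : realType) (c : R) (hc : 1 <= c) :
  exists A : R, 0 < A /\
    forall (N : nat) (K : nat -> 'M[R]_N.+1),
      (forall i, (0 < i)%N -> QN (K i)) ->
      c_stable c K (unif R N) ->
      forall eps : R, 0 < eps < 1 ->
        exists n : nat, merged K eps n /\
          n%:R <= A * N%:R ^+ 2 * (1 + logp (1 / eps)).
Proof.
exists (231 * c); split; first lra.
move=> N K K_QN K_stable eps eps01; have /andP[eps_gt0 eps_lt1] := eps01.
have [N0 | N_gt0] := posnP N.
  subst N; exists 0%N; split; last by rewrite expr0n /= mulr0 mul0r.
  move=> x y z; rewrite (ord1 x) (ord1 y) (ord1 z) /ratio_close /= mxE eqxx oner_eq0.
  by rewrite divr1 subrr normr0.
set L := ln (1 / eps).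
have L_ge0 : 0 <= L by rewrite ln_ge0 // ler_pdivlMr // mul1r ltW.
set t := Num.truncn (2 * L).
have tL : 2 * L < t.+1%:R by apply: truncnS_gt.
exists ((t + 5).+2 * (Num.truncn (16 * c * N%:R * N.+1%:R)).+1)%N; split.
  apply: merged_Kprod => //; first lra.
    by apply/ltW/truncnS_gt.
  by apply: expRN_le_sqr => //; rewrite natrD -/L -natr1 in tL *; lra.
rewrite /logp -/L max_l //; apply: merging_time_le => //.
by rewrite truncn_le; lra.
Qed.
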